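(* Let $q_1\le q_2\le\dots\le q_L$ be positive reals, and suppose there exist distinct positive reals $p_1,\dots,p_K$ such that: (C1) for each $1\le\ell\le L$, $q_\ell=\sum_{k\in T_\ell}p_k$ for some $T_\ell\subseteq\{1,\dots,K\}$; (C2) for each $1\le k\le K$ there exists $\ell$ with $q_\ell=p_k$; (C3) $\sum_{k\in T}p_k\neq\sum_{k\in T'}p_k$ for all distinct $T,T'\subseteq\{1,\dots,K\}$. Then the sparsest-fit algorithm run on $q_1,\dots,q_L$ outputs $k(L)=K$ and, up to relabeling of the indices $1,\dots,K$, the values $p_1,\dots,p_K$ and the sets $A_k=\{\ell: k\in T_\ell\}$, $1\le k\le K$.
   Context: Sparsest-fit algorithm on input $q_1\le\dots\le q_L$: initialize $p_0=0$, $k(0)=0$, and $A_k=\emptyset$ for all $k$. For $\ell=1,\dots,L$: if $q_\ell=\sum_{k\in T}p_k$ for some $T\subseteq\{0,1,\dots,k(\ell-1)\}$ (using the values $p_k$ found so far), set $k(\ell)=k(\ell-1)$ and $A_k\leftarrow A_k\cup\{\ell\}$ for all $k\in T$; otherwise set $k(\ell)=k(\ell-1)+1$, $p_{k(\ell)}=q_\ell$ and $A_{k(\ell)}\leftarrow A_{k(\ell)}\cup\{\ell\}$. Finally output $k(L)$ and $(p_k,A_k)$ for $1\le k\le k(L)$. The algorithm has no knowledge of $K$ or of the sets $T_\ell$. *)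

From HB Require Import structures.
From mathcomp Require Import all_boot all_order all_algebra.
From mathcomp Require Import reals.
Set Implicit Arguments. Unset Strict Implicit. Unset Printing Implicit Defensive.
Import Order.TTheory GRing.Theory Num.Theory.
Local Open Scope ring_scope.

(* Sparsest-fit algorithm, as a relation describing all possible runs
   (the algorithm may choose any fitting T).  Inputs are 0-indexed:
   q 0, ..., q (L-1) stand for q_1, ..., q_L.  A state after processing
   l inputs is (k, pv, A): k = k(l), pv j = p_j (pv 0 = 0), and
   A j m = true iff input m (0-indexed) belongs to A_j.
   A subset T of {0,...,k} is a boolean predicate T on nat; its sum is
   \sum_(0 <= i < k.+1 | T i) pv i. *)
Inductive sf_run (R : realType) (q : nat -> R)
  : nat -> nat -> (nat -> R) -> (nat -> nat -> bool) -> Prop :=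
| sf_nil : sf_run q 0 0 (fun _ => 0) (fun _ _ => false)
| sf_old l k pv A (T : pred nat) :
    sf_run q l k pv A ->
    q l = \sum_(0 <= i < k.+1 | T i) pv i ->
    sf_run q l.+1 k pv (fun j m => A j m || [&& m == l, (j <= k)%N & T j])
| sf_new l k pv A :
    sf_run q l k pv A ->
    (forall T : pred nat, q l <> \sum_(0 <= i < k.+1 | T i) pv i) ->
    sf_run q l.+1 k.+1 (fun j => if j == k.+1 then q l else pv j)
           (fun j m => A j m || ((m == l) && (j == k.+1))).

From HB Require Import structures.
From mathcomp Require Import all_boot all_order all_algebra.
From mathcomp Require Import reals.
From Stdlib Require Import Classical.
Set Implicit Arguments. Unset Strict Implicit. Unset Printing Implicit Defensive.
Import Order.TTheory GRing.Theory Num.Theory.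
Local Open Scope ring_scope.

(* Every run keeps, as an invariant, a bijection [psi] from the set [F] of
   atoms p_i found so far onto the new indices 1..k, with pv (psi i) = p i
   and A (psi i) = {m : i \in T m}.  By (C3) a subset sum of found atoms
   determines its subset, so a fitted input q_l has T_l <= F and the
   algorithm records exactly T_l.  An unfitted input has some atom p_i0 in
   T_l outside F; the input with q = p_i0 (C2) comes no earlier, so by
   sortedness q_l <= p_i0 <= q_l, and the algorithm creates exactly that
   atom.  At the end (C2) forces F to be everything. *)

Lemma subset_sums_inj (V : nmodType) (I : finType) (p : I -> V) :
  (forall S1 S2 : {set I}, S1 != S2 ->
     \sum_(i in S1) p i <> \sum_(i in S2) p i) ->
  injective (fun S : {set I} => \sum_(i in S) p i).
Proof. by move=> p_sep S1 S2 eqS; apply/eqP/negPn/negP => /p_sep. Qed.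

Definition labelling (I : finType) (F : {set I}) (psi : I -> nat) (k : nat) :=
  [/\ {in F &, injective psi}, forall i, i \in F -> (0 < psi i <= k)%N
    & forall j, (0 < j <= k)%N -> exists2 i, i \in F & psi i = j].

Section Labelling.

Variables (I : finType) (F : {set I}) (psi : I -> nat) (k : nat).
Hypothesis psi_lab : labelling F psi k.

Lemma labelling_perm_iota :
  perm_eq (index_iota 0 k.+1) (0%N :: map psi (enum F)).
Proof.
have [psi_inj psi_range psi_onto] := psi_lab.
apply: uniq_perm; first exact: iota_uniq.
  rewrite /= map_inj_in_uniq ?enum_uniq ?andbT; last first.
    by move=> x y; rewrite !mem_enum; exact: psi_inj.
  apply/mapP => -[i]; rewrite mem_enum => /psi_range /andP[psi0 _] eq0.
  by rewrite -eq0 in psi0.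
case=> [|j]; rewrite mem_index_iota inE //=; apply/idP/mapP.
- move=> jk; have [i iF <-] := psi_onto j.+1 jk.
  by exists i; rewrite ?mem_enum.
- move=> [i]; rewrite mem_enum => /psi_range /andP[_ ik] eq_j.
  by rewrite -ltnS eq_j ltnS.
Qed.

Lemma labelling_card : #|F| = k.
Proof.
have /perm_size := labelling_perm_iota.
by rewrite size_iota subn0 /= size_map -cardE => -[].
Qed.

Lemma big_nat_labelling (V : nmodType) (f : nat -> V) (P : pred nat) :
  f 0%N = 0 ->
  \sum_(0 <= j < k.+1 | P j) f j = \sum_(i in F | P (psi i)) f (psi i).
Proof.
move=> f0; rewrite (perm_big _ labelling_perm_iota) big_cons big_map.
by rewrite big_enum_cond /= f0; case: (P 0%N); rewrite ?add0r.
Qed.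

Lemma labelling_setU1 i0 : i0 \notin F ->
  labelling (i0 |: F) (fun i => if i == i0 then k.+1 else psi i) k.+1.
Proof.
move=> i0F; have [psi_inj psi_range psi_onto] := psi_lab.
have neq_i0 i : i \in F -> (i == i0) = false.
  by move=> iF; apply: contraNF i0F => /eqP <-.
have neq_new i : i \in F -> (psi i == k.+1) = false.
  by move=> /psi_range /andP[_ ik]; rewrite ltn_eqF // ltnS.
split.
- move=> x y; rewrite !inE.
  case/orP=> [/eqP ->|xF] /orP[/eqP ->|yF]; rewrite ?eqxx ?neq_i0 //.
  + by move/esym/eqP; rewrite neq_new.
  + by move/eqP; rewrite neq_new.
  + exact: psi_inj.
- move=> i; rewrite !inE => /orP[/eqP ->|iF]; first by rewrite eqxx leqnn.
  by rewrite neq_i0 //; have /andP[-> /leqW] := psi_range _ iF.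
- move=> j /andP[j0]; rewrite leq_eqVlt ltnS => /orP[/eqP ->|jk].
    by exists i0; rewrite ?setU11 ?eqxx.
  have [i iF <-] := psi_onto j (introT andP (conj j0 jk)).
  by exists i; rewrite ?setU1r ?neq_i0.
Qed.

End Labelling.

Lemma sf_run_exists (R : realType) (q : nat -> R) (l : nat) :
  exists k pv A, sf_run q l k pv A.
Proof.
elim: l => [|l [k [pv [A run]]]]; first by do 3 eexists; exact: sf_nil.
have [[Tp fit] | no_fit] :=
  classic (exists Tp : pred nat, q l = \sum_(0 <= i < k.+1 | Tp i) pv i).
- by do 3 eexists; exact: sf_old run fit.
- by do 3 eexists; apply: sf_new run _ => Tp fit; apply: no_fit; exists Tp.
Qed.

Section SparsestFit.

Variables (R : realType) (L K : nat) (q : nat -> R) (p : 'I_K -> R).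
Variable T : nat -> {set 'I_K}.

Hypothesis q_sorted : forall l m, (l <= m)%N -> (m < L)%N -> q l <= q m.
Hypothesis p_pos : forall k, 0 < p k.
Hypothesis p_inj : injective p.
Hypothesis C1 : forall l, (l < L)%N -> q l = \sum_(k in T l) p k.
Hypothesis C2 : forall k, exists l, (l < L)%N /\ q l = p k.
Hypothesis C3 : forall T1 T2 : {set 'I_K}, T1 != T2 ->
  \sum_(k in T1) p k <> \sum_(k in T2) p k.

Record sf_inv (l k : nat) (pv : nat -> R) (A : nat -> nat -> bool)
    (F : {set 'I_K}) (psi : 'I_K -> nat) : Prop := {
  inv_label : labelling F psi k;
  inv_value : forall i, i \in F -> pv (psi i) = p i;
  inv_value0 : pv 0%N = 0;
  inv_members : forall i m, i \in F -> A (psi i) m = (m < l)%N && (i \in T m);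
  inv_members_out : forall j m, (k < j)%N -> A j m = false;
  inv_atom_found : forall m i, (m < l)%N -> q m = p i -> i \in F;
  inv_fit_found : forall m, (m < l)%N -> T m \subset F }.

Lemma fit_singleton l i : (l < L)%N -> q l = p i -> T l = [set i].
Proof.
move=> lL qli; apply: (subset_sums_inj C3).
by rewrite /= -C1 // qli big_set1.
Qed.

Lemma sum_found_fit l k pv A F psi (Tp : pred nat) :
  sf_inv l k pv A F psi ->
  \sum_(0 <= j < k.+1 | Tp j) pv j = \sum_(i in F | Tp (psi i)) p i.
Proof.
case=> lab value value0 *; rewrite (big_nat_labelling lab) //.
by apply: eq_bigr => i /andP[/value].
Qed.

Lemma sf_inv_nil :
  sf_inv 0 0 (fun _ => 0) (fun _ _ => false) set0 (fun _ => 0%N).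
Proof.
split=> //; last by move=> ?; rewrite in_set0.
split; try by move=> ?; rewrite ?in_set0.
by case=> // j /andP[].
Qed.

Lemma sf_inv_old l k pv A F psi (Tp : pred nat) :
  (l < L)%N -> sf_inv l k pv A F psi ->
  q l = \sum_(0 <= j < k.+1 | Tp j) pv j ->
  sf_inv l.+1 k pv (fun j m => A j m || [&& m == l, (j <= k)%N & Tp j]) F psi.
Proof.
move=> lL inv fit; rewrite (sum_found_fit _ inv) in fit.
case: inv => lab value value0 members out found fits.
have Tl : T l = [set i in F | Tp (psi i)].
  apply: (subset_sums_inj C3); rewrite /= -C1 // fit.
  by apply: eq_bigl => i; rewrite inE.
split=> //.
- move=> i m iF; rewrite members // ltnS.
  have [_ /(_ i iF) /andP[_ ->] _] := lab.
  case: (ltngtP m l) => [_|_|->] /=; rewrite ?orbF //.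
  by rewrite Tl inE iF.
- by move=> j m kj; rewrite out // leqNgt kj andbF.
- move=> m i; rewrite ltnS leq_eqVlt => /orP[/eqP ->|]; last exact: found.
  move/(fit_singleton lL); rewrite Tl => /setP /(_ i).
  by rewrite !inE eqxx => /andP[].
- move=> m; rewrite ltnS leq_eqVlt => /orP[/eqP ->|]; last exact: fits.
  by rewrite Tl; apply/subsetP => i; rewrite inE => /andP[].
Qed.

Lemma unfitted_input_is_atom l k pv A F psi :
  (l < L)%N -> sf_inv l k pv A F psi ->
  (forall Tp : pred nat, q l <> \sum_(0 <= j < k.+1 | Tp j) pv j) ->
  exists2 i0, i0 \notin F & q l = p i0.
Proof.
move=> lL inv no_fit; have [inj _ _] := inv_label inv.
have [TlF | /subsetPn[i0 i0T i0F]] := boolP (T l \subset F).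
  case: (no_fit [pred j | [exists i in T l, psi i == j]]).
  rewrite (sum_found_fit _ inv) C1 //; apply: eq_bigl => i /=.
  apply/idP/andP => [iT | [iF /existsP[i' /andP[i'T /eqP eqi]]]].
    by split; [exact: (subsetP TlF) | apply/existsP; exists i; rewrite iT /=].
  by rewrite -(inj _ _ (subsetP TlF _ i'T) iF eqi).
exists i0 => //; have [l' [l'L ql']] := C2 i0.
have ll' : (l <= l')%N.
  rewrite leqNgt; apply: contra i0F => l'l.
  exact: inv_atom_found inv _ _ l'l ql'.
apply: le_anti; rewrite -{1}ql' q_sorted //=.
rewrite C1 // (bigD1 i0) //= lerDl; apply: sumr_ge0 => i _; exact: ltW.
Qed.

Lemma sf_inv_new l k pv A F psi i0 :
  (l < L)%N -> sf_inv l k pv A F psi -> i0 \notin F -> q l = p i0 ->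
  sf_inv l.+1 k.+1 (fun j => if j == k.+1 then q l else pv j)
    (fun j m => A j m || ((m == l) && (j == k.+1))) (i0 |: F)
    (fun i => if i == i0 then k.+1 else psi i).
Proof.
move=> lL inv i0F qli0; have Tl := fit_singleton lL qli0.
case: inv => lab value value0 members out found fits.
have neq_i0 i : i \in F -> (i == i0) = false.
  by move=> iF; apply: contraNF i0F => /eqP <-.
have neq_new i : i \in F -> (psi i == k.+1) = false.
  have [_ range _] := lab.
  by move=> /range /andP[_ ik]; rewrite ltn_eqF // ltnS.
have i0_notin_T m : (m < l)%N -> (i0 \in T m) = false.
  by move=> ml; apply: contraNF i0F => /(subsetP (fits _ ml)).
split=> //; first exact: labelling_setU1.
- move=> i; rewrite !inE => /orP[/eqP ->|iF]; first by rewrite !eqxx.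
  by rewrite neq_i0 // neq_new // value.
- move=> i m; rewrite !inE => /orP[/eqP ->|iF].
    rewrite !eqxx out // andbT ltnS /=.
    case: (ltngtP m l) => [ml|//|->]; first by rewrite i0_notin_T ?andbF.
    by rewrite Tl set11.
  rewrite neq_i0 // members // neq_new // andbF orbF ltnS.
  by case: (ltngtP m l) => [//|//|->]; rewrite Tl inE neq_i0.
- by move=> j m kj; rewrite out ?(ltnW kj) // (gtn_eqF kj) andbF.
- move=> m i; rewrite ltnS leq_eqVlt => /orP[/eqP -> qli|ml qmi].
    by rewrite (p_inj (etrans (esym qli) qli0)) setU11.
  by rewrite setU1r ?(found _ _ ml qmi).
- move=> m; rewrite ltnS leq_eqVlt => /orP[/eqP ->|ml].
    by rewrite Tl sub1set setU11.
  by apply: subset_trans (fits _ ml) _; exact: subsetUr.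
Qed.

Lemma sf_run_inv l k pv A :
  sf_run q l k pv A -> (l <= L)%N -> exists F psi, sf_inv l k pv A F psi.
Proof.
elim=> {l k pv A} [|l k pv A Tp _ IH fit|l k pv A _ IH no_fit] lL.
- by exists set0, (fun _ => 0%N); exact: sf_inv_nil.
- have [F [psi inv]] := IH (ltnW lL).
  by exists F, psi; exact: sf_inv_old inv fit.
- have [F [psi inv]] := IH (ltnW lL).
  have [i0 i0F qli0] := unfitted_input_is_atom lL inv no_fit.
  by do 2 eexists; exact: sf_inv_new inv i0F qli0.
Qed.

Lemma sf_inv_complete k pv A F psi : sf_inv L k pv A F psi -> F = setT.
Proof.
move=> inv; apply/setP => i; rewrite inE.
by have [l [lL qli]] := C2 i; exact: inv_atom_found inv _ _ lL qli.
Qed.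

End SparsestFit.

Theorem lemma2 (R : realType) (L K : nat) (q : nat -> R) (p : 'I_K -> R)
  (T : nat -> {set 'I_K})
  (q_pos : forall l, (l < L)%N -> 0 < q l)
  (q_sorted : forall l m, (l <= m)%N -> (m < L)%N -> q l <= q m)
  (p_pos : forall k, 0 < p k)
  (p_inj : injective p)
  (C1 : forall l, (l < L)%N -> q l = \sum_(k in T l) p k)
  (C2 : forall k, exists l, (l < L)%N /\ q l = p k)
  (C3 : forall T1 T2 : {set 'I_K}, T1 != T2 ->
          \sum_(k in T1) p k <> \sum_(k in T2) p k) :
  (exists k pv A, sf_run q L k pv A) /\
  (forall k pv A, sf_run q L k pv A ->
     k = K /\
     exists sigma : 'I_K -> 'I_K, bijective sigma /\
       forall i : 'I_K, pv (sigma i).+1 = p i /\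
         forall l, A (sigma i).+1 l = (l < L)%N && (i \in T l)).
Proof.
split=> [|k pv A run]; first exact: sf_run_exists.
have [F [psi inv]] := sf_run_inv q_sorted p_pos p_inj C1 C2 C3 run (leqnn L).
have FT := sf_inv_complete C2 inv.
case: inv; rewrite FT => lab value _ members _ _ _.
have [inj range _] := lab.
have kK : k = K by rewrite -(labelling_card lab) cardsT card_ord.
split=> //; pose sigma i : 'I_K := insubd i (psi i).-1.
have sigmaS i : (sigma i).+1 = psi i.
  have /andP[psi0 psik] := range i (in_setT i).
  by rewrite insubdK ?prednK // -topredE /= -ltnS prednK // -kK.
exists sigma; split.
- apply: injF_bij => i j eq_ij; apply: inj; rewrite ?in_setT //.
  by rewrite -!sigmaS eq_ij.
- move=> i; rewrite sigmaS value ?in_setT //.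
  by split=> // l; exact: members (in_setT i).
Qed.
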